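(* Let $n\ge 1$. Suppose $\eta_{t+1}\le\eta_t$ for all $t=1,\ldots,n-1$, suppose the base algorithm $\mathcal{A}$ satisfies the regret bound $(\ast)$, and suppose the transition path $T_n\in\mathcal{T}_n$ is covered by a transition path $\widehat{T}_n=(\hat t_1,\ldots,\hat t_{C(\widehat{T}_n)};n)\in\mathcal{T}_n$ with $w_n(\widehat{T}_n)>0$ (with $\hat t_0=1$, $\hat t_{C(\widehat T_n)+1}=n+1$). (a) If $\ell$ is convex in its first argument and takes values in $[0,1]$, then for every meta expert $(T_n,a)$ the forecaster of Algorithm 1 satisfies \[ \widehat L_n - L_n(T_n,a)\le \sum_{c=0}^{C(\widehat T_n)}\rho_{\mathcal E}(\hat t_{c+1}-\hat t_c)+\sum_{t=1}^n\frac{\eta_t}{8}+\frac{1}{\eta_n}\ln\frac{1}{w_n(\widehat T_n)} \le (C(\widehat T_n)+1)\,\rho_{\mathcal E}\!\left(\frac{n}{C(\widehat T_n)+1}\right)+\sum_{t=1}^n\frac{\eta_t}{8}+\frac{1}{\eta_n}\ln\frac{1}{w_n(\widehat T_n)}. \] (b) If $\ell$ is exp-concave for the value $\eta>0$ and Algorithm 1 is used with $\eta_t=\eta$ for all $t$, then for every meta expert $(T_n,a)$ \[ \widehat L_n - L_n(T_n,a)\le \sum_{c=0}^{C(\widehat T_n)}\rho_{\mathcal E}(\hat t_{c+1}-\hat t_c)+\frac{1}{\eta}\ln\frac{1}{w_n(\widehat T_n)} \le (C(\widehat T_n)+1)\,\rho_{\mathcal E}\!\left(\frac{n}{C(\widehat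 T_n)+1}\right)+\frac{1}{\eta}\ln\frac{1}{w_n(\widehat T_n)}. \]
   Context: Online prediction setting: $\mathcal D$ is a convex subset of a vector space, $\mathcal Y$ a set, and $\ell:\mathcal D\times\mathcal Y\to\mathbb R$ a loss function convex in its first argument. $\mathcal E$ is a set of base experts. In each round $t=1,2,\ldots$ the environment chooses an outcome $y_t\in\mathcal Y$ and advice $f_{i,t}\in\mathcal D$ for each $i\in\mathcal E$; the advice is revealed, the forecaster outputs $\widehat p_t\in\mathcal D$, then $y_t$ is revealed. $\widehat L_n=\sum_{t=1}^n\ell(\widehat p_t,y_t)$, and for $1\le t_1\le t_2$, $L_i(t_1,t_2)=\sum_{t=t_1}^{t_2-1}\ell(f_{i,t},y_t)$. The loss is exp-concave for $\eta>0$ if $p\mapsto e^{-\eta\ell(p,y)}$ is concave for every fixed $y$. Base algorithm: $\mathcal A$ is a forecasting algorithm in this protocol satisfying the regret bound $(\ast)$: for every $n$ and every sequence of outcomes and advice, the cumulative loss of $\mathcal A$ over $n$ rounds minus $\min_{i\in\mathcal E}$ of the cumulative loss of expert $i$ is at most $\rho_{\mathcal E}(n)$, where $\rho_{\mathcal E}:[0,\infty)\to[0,\infty)$ is nondecreasing, concave and $\rho_{\mathcal E}(0)=0$. For $t_1<t_2$, $L_{\mathcal A}(t_1,t_2)$ denotes the loss of a fresh instance of $\mathcal A$ started at time $t_1$ and run on rounds $t_1,\ldots,t_2-1$. Transition paths: $\mathcal T_t$ is the set of vectors $T=(t_1,\ldots,t_C;t)$ with $C\ge 0$ and $1<t_1<\cdots<t_C\le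 t$; $C(T)=C$ is the number of switches, and $t_0:=1$, $t_{C+1}:=t+1$. A meta expert $(T,a)$ with $T\in\mathcal T_n$ and $a=(i_0,\ldots,i_C)\in\mathcal E^{C+1}$ follows expert $i_c$ on $[t_c,t_{c+1})$; its loss is $L_n(T,a)=\sum_{c=0}^C L_{i_c}(t_c,t_{c+1})$. For $t\le n$ the truncation of $T\in\mathcal T_n$ is $T_t=(t_1,\ldots,t_k;t)$ where $t_k\le t<t_{k+1}$, and $\tau_t(T)=t_k$. $\widehat T$ covers $T$ if every switch point of $T$ is a switch point of $\widehat T$. The algorithm $(\mathcal A,T)$ runs $\mathcal A$ restarting it at each $t_c$; its prediction at time $t$ is $f_{\mathcal A,t}(\tau_t(T))$, the output at time $t$ of an instance of $\mathcal A$ started at time $\tau_t(T)$; $L_t(\mathcal A,T)$ denotes its cumulative loss through time $t$, with $L_0(\mathcal A,T_0)=0$ for the empty path $T_0$. Weight functions: $w_t:\mathcal T_t\to[0,1]$ is a probability distribution on $\mathcal T_t$ for each $t$, and the family is consistent: $w_t(T_t)=\sum_{T'\in\mathcal T_{t+1}:T'_t=T_t}w_{t+1}(T')$; $w_0(T_0)=1$. Algorithm 1 (inputs $\mathcal A$, $\{w_t\}$, learning parameters $\eta_t>0$): for $t=1,\ldots,n$ predict $\widehat p_t=\dfrac{\sum_{T\in\mathcal T_t}w_t(T)e^{-\eta_tL_{t-1}(\mathcal A,T_{t-1})}f_{\mathcal A,t}(\tau_t(T))}{\sum_{T\in\mathcal T_t}w_t(T)e^{-\eta_tL_{t-1}(\mathcal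 A,T_{t-1})}}$. *)

From HB Require Import structures.
From mathcomp Require Import all_boot all_order all_algebra.
From mathcomp Require Import all_classical all_reals all_analysis.
From Stdlib Require List.
Set Implicit Arguments. Unset Strict Implicit. Unset Printing Implicit Defensive.
Import Order.TTheory GRing.Theory Num.Theory.
Local Open Scope ring_scope.

Section Defs.
Variables (R : realType) (V : lmodType R) (Y : Type) (E : finType).

Definition convex_dom (D : V -> Prop) : Prop :=
  forall x1 x2 (lam : R), D x1 -> D x2 -> 0 <= lam <= 1 ->
    D (lam *: x1 + (1 - lam) *: x2).

Definition convex_loss (D : V -> Prop) (loss : V -> Y -> R) : Prop :=
  forall (yy : Y) x1 x2 (lam : R), D x1 -> D x2 -> 0 <= lam <= 1 ->
    loss (lam *: x1 + (1 - lam) *: x2) yy <= lam * loss x1 yy + (1 - lam) * loss x2 yy.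

Definition exp_concave (D : V -> Prop) (loss : V -> Y -> R) (eta : R) : Prop :=
  forall (yy : Y) x1 x2 (lam : R), D x1 -> D x2 -> 0 <= lam <= 1 ->
    lam * expR (- eta * loss x1 yy) + (1 - lam) * expR (- eta * loss x2 yy)
      <= expR (- eta * loss (lam *: x1 + (1 - lam) *: x2) yy).

(* A deterministic forecasting algorithm: given the history of past rounds
   (advice vector, outcome) and the current advice, it outputs a prediction. *)
Definition algo := seq ((E -> V) * Y) -> (E -> V) -> V.

Definition algo_in_D (D : V -> Prop) (A : algo) : Prop :=
  forall h g, List.Forall (fun p => forall i, D (p.1 i)) h ->
    (forall i, D (g i)) -> D (A h g).

(* rounds are numbered 1,2,...; f t i is the advice of expert i at round t,
   y t the outcome at round t *)
Definition hist (f : nat -> E -> V) (y : nat -> Y) (s t : nat) :=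
  [seq (f k, y k) | k <- index_iota s t].

Definition expert_loss (loss : V -> Y -> R) f y (i : E) (t1 t2 : nat) : R :=
  \sum_(t1 <= k < t2) loss (f k i) (y k).

(* output at time t of a fresh instance of A started at time s *)
Definition algo_pred (A : algo) f y (s t : nat) : V := A (hist f y s t) (f t).

Definition algo_loss (loss : V -> Y -> R) (A : algo) f y (t1 t2 : nat) : R :=
  \sum_(t1 <= k < t2) loss (algo_pred A f y t1 k) (y k).

Definition regret_bound (D : V -> Prop) (loss : V -> Y -> R) (A : algo)
    (rho : R -> R) : Prop :=
  forall (f : nat -> E -> V) (y : nat -> Y), (forall k i, D (f k i)) ->
    forall (m : nat) (i : E),
      algo_loss loss A f y 1 m.+1 - expert_loss loss f y i 1 m.+1 <= rho m%:R.

Definition rho_ok (rho : R -> R) : Prop :=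
  [/\ forall x, 0 <= x -> 0 <= rho x,
      forall x1 x2, 0 <= x1 -> x1 <= x2 -> rho x1 <= rho x2,
      forall x1 x2 (lam : R), 0 <= x1 -> 0 <= x2 -> 0 <= lam <= 1 ->
        lam * rho x1 + (1 - lam) * rho x2 <= rho (lam * x1 + (1 - lam) * x2)
    & rho 0 = 0].

(* Transition path T = (t_1,...,t_C; t) in T_t, represented by t and the
   sequence s = [:: t_1; ...; t_C] with 1 < t_1 < ... < t_C <= t. *)
Definition is_tpath (t : nat) (s : seq nat) : bool :=
  sorted ltn s && all (fun x => (1 < x <= t)%N) s.

(* enumeration of T_t: bit masks over the candidate switch points 2..t *)
Definition tpath_of (t : nat) (m : (t.-1).-tuple bool) : seq nat :=
  mask m (index_iota 2 t.+1).

Definition trunc (t : nat) (s : seq nat) : seq nat := [seq x <- s | (x <= t)%N].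
Definition tau (t : nat) (s : seq nat) : nat := last 1%N (trunc t s).

Definition weights_ok (w : nat -> seq nat -> R) : Prop :=
  [/\ forall t s, is_tpath t s -> 0 <= w t s <= 1,
      forall t, \sum_(m : (t.-1).-tuple bool) w t (tpath_of m) = 1,
      w 0%N [::] = 1
    & forall t s, is_tpath t s ->
        w t s = \sum_(m : (t.+1.-1).-tuple bool | trunc t (@tpath_of t.+1 m) == s)
                  w t.+1 (@tpath_of t.+1 m)].

(* L_t(A,T): cumulative loss through time t of A restarted at the switch
   points of T *)
Definition AT_loss (loss : V -> Y -> R) (A : algo) f y (s : seq nat) (t : nat) : R :=
  \sum_(1 <= k < t.+1) loss (algo_pred A f y (tau k s) k) (y k).

Definition alg1_weight loss A f y (w : nat -> seq nat -> R) (eta : nat -> R)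
    (t : nat) (s : seq nat) : R :=
  w t s * expR (- eta t * AT_loss loss A f y (trunc t.-1 s) t.-1).

Definition alg1_pred loss A f y w eta (t : nat) : V :=
  (\sum_(m : (t.-1).-tuple bool) alg1_weight loss A f y w eta t (tpath_of m))^-1 *:
  \sum_(m : (t.-1).-tuple bool)
      alg1_weight loss A f y w eta t (tpath_of m) *: algo_pred A f y (tau t (tpath_of m)) t.

Definition alg1_loss loss A f y w eta (n : nat) : R :=
  \sum_(1 <= t < n.+1) loss (alg1_pred loss A f y w eta t) (y t).

Definition tpoint (n : nat) (s : seq nat) (c : nat) : nat := nth 0%N (1%N :: rcons s n.+1) c.

(* L_n(T,a) for the meta expert (T,a), a = (a 0, ..., a C) *)
Definition meta_loss loss f y (n : nat) (s : seq nat) (a : nat -> E) : R :=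
  \sum_(c < (size s).+1)
     expert_loss loss f y (a c) (tpoint n s c) (tpoint n s c.+1).

Definition rho_sum (rho : R -> R) (n : nat) (s : seq nat) : R :=
  \sum_(c < (size s).+1) rho ((tpoint n s c.+1 - tpoint n s c)%N%:R).

End Defs.

From HB Require Import structures.
From mathcomp Require Import all_boot all_order all_algebra.
From mathcomp Require Import all_classical all_reals all_analysis.
From mathcomp.algebra_tactics Require Import ring lra.
From mathcomp Require Import zify.
Import Order.TTheory GRing.Theory Num.Theory numFieldNormedType.Exports.
Set Implicit Arguments. Unset Strict Implicit. Unset Printing Implicit Defensive.
Local Open Scope ring_scope.

(* Algorithm 1 is the exponentially weighted average forecaster over the
   experts (A, T), T ranging over transition paths with prior w_n.  The usual
   potential argument -- Hoeffding's lemma for bounded convex losses, Jensen's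
   inequality for exp-concave ones, and the monotonicity of
   eta |-> (1/eta) ln E exp (-eta X) to absorb decreasing learning rates --
   compares its loss with that of (A, T^) up to the eta_t / 8 terms and
   (1/eta_n) ln (1/w_n(T^)).  Since T^ covers T, on every segment of T^ the meta
   expert (T, a) follows one base expert, so the regret bound of A restarted at
   the switch points of T^ contributes rho(t^_(c+1) - t^_c) per segment, and
   concavity of rho gives the second inequality. *)

Section Jensen.
Variables (R : realType) (V : lmodType R) (D : V -> Prop) (phi : V -> R).
Hypothesis convD : convex_dom D.
Hypothesis concave_phi : forall x1 x2 (lam : R), D x1 -> D x2 -> 0 <= lam <= 1 ->
  lam * phi x1 + (1 - lam) * phi x2 <= phi (lam *: x1 + (1 - lam) *: x2).

Lemma concave_jensen (I : eqType) (r : seq I) (lam : I -> R) (x : I -> V) :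
  (forall i, 0 <= lam i) -> (forall i, D (x i)) -> \sum_(i <- r) lam i = 1 ->
  D (\sum_(i <- r) lam i *: x i) /\
  \sum_(i <- r) lam i * phi (x i) <= phi (\sum_(i <- r) lam i *: x i).
Proof.
move=> + xD; elim: r lam => [|j r IH] lam lam_ge0.
  by rewrite big_nil => /esym/eqP; rewrite oner_eq0.
rewrite !big_cons => lam_sum1.
have sum_ge0 : 0 <= \sum_(i <- r) lam i by apply: sumr_ge0.
have lamj_ge0 := lam_ge0 j.
have [lamj1|lamj_neq1] := eqVneq (lam j) 1.
  have : \sum_(i <- r) lam i == 0 by apply/eqP; lra.
  rewrite psumr_eq0 // => /allP lam0.
  have lam0' i : i \in r -> lam i = 0 by move/lam0/eqP.
  rewrite !big_seq !big1 ?lamj1 ?scale1r ?mul1r ?addr0 => [//|i /lam0' ->|i /lam0' ->].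
  - by rewrite mul0r.
  - by rewrite scale0r.
have rest_gt0 : 0 < 1 - lam j by rewrite lt_def subr_eq0 eq_sym lamj_neq1 /=; lra.
pose lam' i := lam i / (1 - lam j).
have lam'_ge0 i : 0 <= lam' i by apply: divr_ge0 => //; exact: ltW.
have lam'_sum1 : \sum_(i <- r) lam' i = 1.
  rewrite -mulr_suml (_ : \sum_(i <- r) lam i = 1 - lam j); last lra.
  by rewrite divff ?gt_eqF.
have [IHD IHphi] := IH lam' lam'_ge0 lam'_sum1.
set z := \sum_(i <- r) lam' i *: x i in IHD IHphi.
have -> : \sum_(i <- r) lam i *: x i = (1 - lam j) *: z.
  rewrite /z scaler_sumr; apply: eq_bigr => i _.
  by rewrite scalerA /lam' mulrC divfK ?gt_eqF.
have -> : \sum_(i <- r) lam i * phi (x i) = (1 - lam j) * \sum_(i <- r) lam' i * phi (x i).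
  rewrite mulr_sumr; apply: eq_bigr => i _.
  by rewrite mulrA /lam' [_ * (_ / _)]mulrC divfK ?gt_eqF.
have lamj01 : 0 <= lam j <= 1 by apply/andP; split => //; lra.
split; first exact: convD.
apply: le_trans (concave_phi (xD j) IHD lamj01).
by apply: lerD => //; apply: ler_wpM2l => //; exact: ltW.
Qed.
End Jensen.

Section ExpInequalities.
Variable R : realType.

Lemma le_of_derive_ge0 (f df : R -> R) (x : R) : 0 <= x ->
  (forall z : R, is_derive z (1:R) f (df z)) -> (forall z : R, 0 < z -> z < x -> 0 <= df z) ->
  f 0 <= f x.
Proof.
move=> x_ge0 f_deriv df_ge0; have [->//|x_neq0] := eqVneq x 0.
have x_gt0 : 0 < x by rewrite lt_def x_neq0.
have [c /andP[c_gt0 c_ltx]] : exists2 c, c \in `]0, x[%R & f x - f 0 = df c * (x - 0).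
  apply: MVT => //; apply: continuous_subspaceT => r.
  by apply/differentiable_continuous/derivable1_diffP; case: (f_deriv r).
by rewrite -subr_ge0 => ->; rewrite subr0 mulr_ge0 //; exact: df_ge0.
Qed.

(* That is, [tanh (x / 2) <= x / 2]. *)
Lemma tanh_half_le (x : R) : 0 <= x -> 2 * (expR x - 1) <= x * (expR x + 1).
Proof.
move=> x_ge0.
pose H (z : R) := z * (expR z + 1) - 2 * (expR z - 1).
suff : H 0 <= H x by rewrite /H expR0 !mul0r subrr mulr0 subr0 subr_ge0.
apply: (@le_of_derive_ge0 H (fun z => 1 - expR z + z * expR z)) => // [z|z z_gt0 _].
  have -> : H = (id * (expR + cst 1) - cst 2 * (expR - cst 1) : R -> R) by [].
  apply: is_derive_eq.
  rewrite /= !(addr0, subr0, scaler0) /GRing.scale /= mulr1.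
  have -> : (expR + cst 1) z = expR z + 1 by [].
  ring.
have ez_gt0 : 0 < expR z by exact: expR_gt0.
have : (1 - z) * expR z <= 1.
  have := expR_ge1Dx (- z); rewrite expRN => h.
  have : (1 - z) * expR z <= (expR z)^-1 * expR z by rewrite ler_pM2r // addrC.
  by rewrite mulVf ?gt_eqF.
lra.
Qed.

(* The sign of the derivative of [K] in [hoeffding_bernoulli]. *)
Lemma hoeffding_key (p x : R) : 0 <= p <= 1 -> 0 <= x ->
  p * (1 - p) * (1 - expR (- x)) <= x / 4 * (1 - p + p * expR (- x)).
Proof.
move=> /andP[p_ge0 p_le1] x_ge0.
set z := expR (- (x / 2)).
have z_gt0 : 0 < z by exact: expR_gt0.
have -> : expR (- x) = z ^+ 2.
  by rewrite /z -expRM_natl; congr expR; rewrite mulrN mulrC divfK.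
have z_le1 : z <= 1 by rewrite /z -[X in _ <= X]expR0 ler_expR; lra.
have tanh_z : 4 * (1 - z) <= x * (1 + z).
  have e1 : expR (x / 2) * z = 1 by rewrite /z -expRD subrr expR0.
  have := ler_wpM2r (ltW z_gt0) (@tanh_half_le (x / 2) ltac:(lra)).
  have -> : 2 * (expR (x / 2) - 1) * z = 2 * (1 - z) by rewrite -mulrA mulrBl e1 mul1r.
  have -> : x / 2 * (expR (x / 2) + 1) * z = x / 2 * (1 + z) by rewrite -mulrA mulrDl e1 mul1r.
  lra.
have q_ge0 : 0 <= 1 - p + p * z ^+ 2 by nra.
have var_le : (1 + z) ^+ 2 * (p * (1 - p)) <= 1 - p + p * z ^+ 2.
  have : 0 <= (1 - (1 + z) * p) ^+ 2 by exact: sqr_ge0.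
  nra.
have : 4 * (1 - z) * ((1 + z) ^+ 2 * (p * (1 - p))) <= x * (1 + z) * (1 - p + p * z ^+ 2).
  apply: (le_trans (y := 4 * (1 - z) * (1 - p + p * z ^+ 2))).
    by apply: ler_wpM2l => //; lra.
  exact: ler_wpM2r.
rewrite -(ler_pM2r (_ : 0 < 4 * (1 + z))); last by lra.
nra.
Qed.

Lemma hoeffding_bernoulli (p x : R) : 0 <= p <= 1 -> 0 <= x ->
  1 - p + p * expR (- x) <= expR (- x * p + x ^+ 2 / 8).
Proof.
move=> p01 x_ge0.
pose K (z : R) := (1 - p + p * expR (- z)) * expR (p * z - 1/8 * (z * z)).
have : - K 0 <= - K x.
  apply: (@le_of_derive_ge0 (fun z => - K z)
    (fun z => expR (p * z - 1/8 * (z * z)) *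
       (z / 4 * (1 - p + p * expR (- z)) - p * (1 - p) * (1 - expR (- z))))) => //.
    move=> z.
    have -> : (fun z => - K z) = (- ((cst (1 - p) + cst p * (expR \o -%R)) *
       (expR \o (cst p * id - cst (1/8) * (id * id)))) : R -> R) by [].
    apply: is_derive_eq.
    have -> : (cst p * id - cst (1/8) * (id * id) : R -> R) z = p * z - 1/8 * (z * z) by [].
    have -> : (cst (1 - p) + cst p * (expR \o -%R) : R -> R) z = 1 - p + p * expR (- z) by [].
    rewrite !scaler0 !addr0 ?subr0 add0r /GRing.scale /= ?mulr1.
    by field.
  move=> z z_gt0 _; apply: mulr_ge0; first exact: expR_ge0.
  by rewrite subr_ge0; apply: hoeffding_key => //; exact: ltW.
rewrite /K oppr0 expR0 !mulr0 subrr expR0 !mulr1 subrK lerN2 => K_le.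
have e : expR (p * x - 1 / 8 * (x * x)) * expR (- x * p + x ^+ 2 / 8) = 1.
  by rewrite -expRD -[RHS]expR0; congr expR; rewrite expr2; field.
have := ler_wpM2r (expR_ge0 (- x * p + x ^+ 2 / 8)) K_le.
by rewrite -(mulrA (1 - p + _)) e mulr1 mul1r.
Qed.

(* Convexity of [expR] on the segment [[0, u]]. *)
Lemma expR_mulr_le (r u : R) : 0 <= r <= 1 -> expR (r * u) <= r * expR u + (1 - r).
Proof.
move=> /andP[r_ge0 r_le1].
have e_gt0 : 0 < expR (r * u) by exact: expR_gt0.
have h1 : expR (r * u) * (1 + (1 - r) * u) <= expR u.
  have := ler_wpM2l (ltW e_gt0) (expR_ge1Dx ((1 - r) * u)); rewrite -expRD.
  by rewrite (_ : r * u + (1 - r) * u = u) //; ring.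
have h2 : expR (r * u) * (1 - r * u) <= 1.
  by have := ler_wpM2l (ltW e_gt0) (expR_ge1Dx (- (r * u))); rewrite -expRD subrr expR0.
have -> : expR (r * u) = r * (expR (r * u) * (1 + (1 - r) * u)) +
    (1 - r) * (expR (r * u) * (1 - r * u)) by ring.
apply: lerD; first exact: ler_wpM2l.
by rewrite -[leRHS]mulr1; apply: ler_wpM2l => //; lra.
Qed.

Lemma ln_le_of_le_expR (x z : R) : 0 < x -> x <= expR z -> ln x <= z.
Proof. by move=> x_gt0; rewrite -{2}(expRK z) ler_ln // posrE expR_gt0. Qed.

End ExpInequalities.

Section Mixtures.
Variables (R : realType) (I : finType) (W : I -> R).
Hypothesis W_ge0 : forall i, 0 <= W i.
Hypothesis W_sum1 : \sum_i W i = 1.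

Lemma mix_gt0 (e : I -> R) : (forall i, 0 < e i) -> 0 < \sum_i W i * e i.
Proof.
move=> e_gt0; rewrite lt_def sumr_ge0 ?andbT; last first.
  by move=> i _; apply: mulr_ge0 => //; exact: ltW.
apply/negP => /eqP/psumr_eq0P We0.
have : \sum_i W i = 0.
  apply: big1 => i _.
  have /eqP := We0 (fun i _ => mulr_ge0 (W_ge0 i) (ltW (e_gt0 i))) i isT.
  by rewrite mulf_eq0 (gt_eqF (e_gt0 i)) orbF => /eqP.
by rewrite W_sum1 => /eqP; rewrite oner_eq0.
Qed.

(* Jensen for the concave map [x |-> x ^ (a / b)], at [x = expR (- b * L i)]. *)
Lemma ln_mix_expR_div_le (L : I -> R) (a b : R) : 0 < a -> a <= b ->
  ln (\sum_i W i * expR (- a * L i)) / a <= ln (\sum_i W i * expR (- b * L i)) / b.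
Proof.
move=> a_gt0 ab.
have b_gt0 : 0 < b by exact: lt_le_trans a_gt0 ab.
set M := \sum_i W i * expR (- b * L i).
have M_gt0 : 0 < M by apply: mix_gt0 => i; exact: expR_gt0.
set r := a / b.
have r01 : 0 <= r <= 1.
  apply/andP; split; first by rewrite divr_ge0 //; exact: ltW.
  by rewrite ler_pdivrMr // mul1r.
have key : \sum_i W i * expR (- a * L i) <= expR (r * ln M).
  have split_exp i : expR (- a * L i) = expR (r * (- b * L i - ln M)) * expR (r * ln M).
    by rewrite -expRD; congr expR; rewrite /r; field; rewrite gt_eqF.
  under eq_bigr do rewrite split_exp.
  apply: (le_trans (y := \sum_i W i * ((r * (expR (- b * L i) / M) + (1 - r)) * expR (r * ln M)))).
    apply: ler_sum => i _; apply: ler_wpM2l => //; apply: ler_wpM2r; first exact: expR_ge0.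
    have -> : expR (- b * L i) / M = expR (- b * L i - ln M) by rewrite expRD expRN lnK.
    exact: expR_mulr_le.
  under eq_bigr do rewrite mulrA.
  rewrite -mulr_suml.
  have -> : \sum_i W i * (r * (expR (- b * L i) / M) + (1 - r)) = 1.
    have -> : \sum_i W i * (r * (expR (- b * L i) / M) + (1 - r)) =
        \sum_i ((r / M) * (W i * expR (- b * L i)) + (1 - r) * W i).
      by apply: eq_bigr => i _; field; rewrite gt_eqF.
    rewrite big_split /= -!mulr_sumr W_sum1 -/M.
    by field; rewrite gt_eqF.
  by rewrite mul1r.
have S_gt0 : 0 < \sum_i W i * expR (- a * L i) by apply: mix_gt0 => i; exact: expR_gt0.
have := ln_le_of_le_expR S_gt0 key.
rewrite ler_pdivrMr // => h; apply: le_trans h _.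
by rewrite /r (_ : a / b * ln M = ln M / b * a) //; ring.
Qed.

Lemma hoeffding_mix (X : I -> R) (eta : R) : (forall i, 0 <= X i <= 1) -> 0 < eta ->
  ln (\sum_i W i * expR (- eta * X i)) <= - eta * \sum_i W i * X i + eta ^+ 2 / 8.
Proof.
move=> X01 eta_gt0.
set q := \sum_i W i * X i.
have q01 : 0 <= q <= 1.
  apply/andP; split; first by apply: sumr_ge0 => i _; apply: mulr_ge0 => //; have := X01 i; lra.
  rewrite -W_sum1; apply: ler_sum => i _; rewrite -[leRHS]mulr1; apply: ler_wpM2l => //.
  by have := X01 i; lra.
apply: ln_le_of_le_expR; first by apply: mix_gt0 => i; exact: expR_gt0.
apply: le_trans (hoeffding_bernoulli q01 (ltW eta_gt0)).
apply: (le_trans (y := \sum_i W i * (X i * expR (- eta) + (1 - X i)))).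
  by apply: ler_sum => i _; apply: ler_wpM2l => //; rewrite mulrC expR_mulr_le.
under eq_bigr do rewrite mulrDr mulrBr mulr1 mulrA.
rewrite big_split /= sumrB -mulr_suml W_sum1 -/q; lra.
Qed.

End Mixtures.

Lemma index_iota_switch_points t : index_iota 2 t.+1 = iota 2 t.-1.
Proof. by rewrite /index_iota; congr iota; lia. Qed.

Lemma is_tpath_tpath_of t (m : (t.-1).-tuple bool) : is_tpath t (tpath_of m).
Proof.
rewrite /is_tpath /tpath_of index_iota_switch_points; apply/andP; split.
  exact: (subseq_sorted ltn_trans (mask_subseq _ _) (iota_ltn_sorted _ _)).
apply/allP => x /mem_mask; rewrite mem_iota => /andP[x_ge2 x_lt].
by apply/andP; split => //; case: t m x_lt => [|t] m /=; lia.
Qed.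

Lemma tpath_of_surj t s : is_tpath t s -> exists m : (t.-1).-tuple bool, tpath_of m = s.
Proof.
move=> /andP[s_sorted /allP s_range].
have s_filter : s = [seq x <- iota 2 t.-1 | x \in s].
  apply: (irr_sorted_eq ltn_trans ltnn s_sorted).
    exact: (sorted_filter ltn_trans _ (iota_ltn_sorted _ _)).
  move=> x; rewrite mem_filter /= mem_iota.
  case xs: (x \in s) => //=; have /andP[x_gt1 x_le] := s_range x xs.
  by apply/esym/andP; split => //; case: t {s_sorted s_range} x_le => [|t] /=; lia.
have /subseqP[m size_m s_mask] := filter_subseq (mem s) (iota 2 t.-1).
rewrite size_iota in size_m.
exists (Tuple (introT eqP size_m)).
by rewrite /tpath_of index_iota_switch_points /= -s_mask -s_filter.
Qed.

Lemma tpath_of_inj t : injective (@tpath_of t).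
Proof.
move=> m1 m2; rewrite /tpath_of index_iota_switch_points => e.
apply: eq_from_tnth => i.
have := congr1 (fun s => (i + 2)%N \in s) e; rewrite /= !in_mask ?iota_uniq //.
have -> : index (i + 2)%N (iota 2 t.-1) = i.
  have -> : (i + 2 = nth 0 (iota 2 t.-1) i)%N by rewrite nth_iota // addnC.
  by rewrite index_uniq ?iota_uniq // size_iota.
rewrite mem_iota /= (_ : (2 <= i + 2 < 2 + t.-1)%N) /=; last by have := ltn_ord i; lia.
by rewrite !(tnth_nth false) => ->.
Qed.

Lemma is_tpath_trunc t s : is_tpath t.+1 s -> is_tpath t (trunc t s).
Proof.
move=> /andP[s_sorted /allP s_range]; apply/andP; split.
  exact: (sorted_filter ltn_trans _ s_sorted).
apply/allP => x; rewrite mem_filter => /andP[x_le /s_range /andP[x_gt1 _]].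
by rewrite x_gt1.
Qed.

Lemma trunc_trunc j k s : (j <= k)%N -> trunc j (trunc k s) = trunc j s.
Proof.
move=> jk; rewrite /trunc -filter_predI; apply: eq_filter => x /=.
by apply/andP/idP => [[]//|xj]; split => //; exact: leq_trans jk.
Qed.

Lemma sum_tpath_trunc (R : realType) (w : nat -> seq nat -> R) (G : seq nat -> R) t :
  weights_ok w ->
  \sum_(m : (t.+1.-1).-tuple bool) w t.+1 (@tpath_of t.+1 m) * G (trunc t (@tpath_of t.+1 m)) =
  \sum_(m : (t.-1).-tuple bool) w t (tpath_of m) * G (tpath_of m).
Proof.
move=> [_ _ _ w_consistent].
have trunc_ex m : exists m' : (t.-1).-tuple bool, tpath_of m' == trunc t (@tpath_of t.+1 m).
  by have [m' e] := tpath_of_surj (is_tpath_trunc (is_tpath_tpath_of m)); exists m'; rewrite e.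
pose h m := xchoose (trunc_ex m).
have hP m m' : (h m == m') = (trunc t (@tpath_of t.+1 m) == tpath_of m').
  rewrite -(eqP (xchooseP (trunc_ex m))) -/(h m).
  by apply/eqP/eqP => [-> //|]; exact: tpath_of_inj.
rewrite (partition_big h xpredT) //=; apply: eq_bigr => m' _.
rewrite (w_consistent _ _ (is_tpath_tpath_of m')) mulr_suml.
by apply: eq_big => [m|m]; rewrite hP // => /eqP ->.
Qed.

Section Segments.
Variables (n : nat) (s : seq nat).
Hypotheses (n_gt0 : (0 < n)%N) (s_tpath : is_tpath n s).

Lemma sorted_tpoints : sorted ltn (1%N :: rcons s n.+1).
Proof.
case/andP: s_tpath => s_sorted /allP s_range /=.
rewrite rcons_path (path_sortedE ltn_trans) s_sorted andbT; apply/andP; split.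
  by apply/allP => x /s_range /andP[].
case/lastP: s s_range => [_|s' x s_range] /=; first by rewrite ltnS.
by rewrite last_rcons; have := s_range x; rewrite mem_rcons mem_head => /(_ isT) /andP[].
Qed.

Lemma tpointS i : (i < size s)%N -> tpoint n s i.+1 = nth 0%N s i.
Proof. by move=> lt_i; rewrite /tpoint /= nth_rcons lt_i. Qed.

Lemma tpoint_last : tpoint n s (size s).+1 = n.+1.
Proof. by rewrite /tpoint /= nth_rcons ltnn eqxx. Qed.

Lemma leq_tpoint i j : (i <= j)%N -> (j <= (size s).+1)%N -> (tpoint n s i <= tpoint n s j)%N.
Proof.
rewrite leq_eqVlt => /orP[/eqP -> //|lt_ij] le_j; apply: ltnW.
apply: (sorted_ltn_nth ltn_trans 0%N sorted_tpoints); rewrite ?inE /= ?size_rcons //; lia.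
Qed.

Lemma sum_segments (R : realType) (F : nat -> R) :
  \sum_(1 <= k < n.+1) F k =
  \sum_(c < (size s).+1) \sum_(tpoint n s c <= k < tpoint n s c.+1) F k.
Proof.
suff sum_upto j : (j <= (size s).+1)%N ->
    \sum_(c < j) \sum_(tpoint n s c <= k < tpoint n s c.+1) F k = \sum_(1 <= k < tpoint n s j) F k.
  by rewrite sum_upto // tpoint_last.
elim: j => [_|j IH le_j]; first by rewrite big_ord0 big_geq.
rewrite big_ord_recr /= IH 1?ltnW // -big_cat_nat ?leq_tpoint //.
by rewrite -[1%N]/(tpoint n s 0); apply: leq_tpoint => //; lia.
Qed.

Lemma mem_take_leq_tpoint c x : (c <= size s)%N -> x \in take c s -> (x <= tpoint n s c)%N.
Proof.
move=> le_c /(nthP 0%N) [i]; rewrite size_take_min => lt_i <-.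
rewrite nth_take; last lia.
by rewrite -tpointS; [apply: leq_tpoint|]; lia.
Qed.

Lemma mem_drop_tpoint_leq c x : x \in drop c s -> (tpoint n s c.+1 <= x)%N.
Proof.
move=> /(nthP 0%N) [i]; rewrite size_drop ltn_subRL => lt_ci <-.
rewrite nth_drop -tpointS //; apply: leq_tpoint; first by rewrite ltnS leq_addr.
by rewrite ltnS ltnW.
Qed.

Section InSegment.
Variables (c k : nat).
Hypotheses (le_c : (c <= size s)%N) (k_in : (tpoint n s c <= k < tpoint n s c.+1)%N).

Lemma trunc_segment : trunc k s = take c s.
Proof.
case/andP: k_in => ge_k lt_k.
rewrite /trunc -{1}(cat_take_drop c s) filter_cat.
rewrite (eq_in_filter (a2 := predT)) ?filter_predT; last first.
  by move=> x /(mem_take_leq_tpoint le_c) /= le_x; apply: leq_trans ge_k.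
rewrite (eq_in_filter (a2 := pred0)) ?filter_pred0 ?cats0 // => x /mem_drop_tpoint_leq le_x.
by apply/negbTE; rewrite -ltnNge; apply: leq_trans lt_k le_x.
Qed.

Lemma tau_segment : tau k s = tpoint n s c.
Proof.
rewrite /tau trunc_segment.
case: c le_c k_in => [|c'] le_c' _; first by rewrite take0.
rewrite tpointS // -nth_last size_take_min (minn_idPl le_c') /=.
by rewrite nth_take // (set_nth_default 0%N).
Qed.

Lemma size_trunc_segment : size (trunc k s) = c.
Proof. by rewrite trunc_segment size_take_min (minn_idPl le_c). Qed.

End InSegment.
End Segments.

Lemma trunc_covered_segment n s shat c k : (0 < n)%N -> is_tpath n shat -> {subset s <= shat} ->
  (c <= size shat)%N -> (tpoint n shat c <= k < tpoint n shat c.+1)%N ->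
  trunc k s = trunc (tpoint n shat c) s.
Proof.
move=> n_gt0 shat_tpath sub le_c k_in; rewrite /trunc; apply: eq_in_filter => x xs.
case/andP: (k_in) => ge_k _.
apply/idP/idP => le_x; last exact: leq_trans le_x ge_k.
apply: (mem_take_leq_tpoint n_gt0 shat_tpath le_c).
by rewrite -(trunc_segment n_gt0 shat_tpath le_c k_in) mem_filter le_x sub.
Qed.

Section RestartedAlgorithm.
Variables (R : realType) (V : lmodType R) (Y : Type) (E : finType).
Variables (D : V -> Prop) (loss : V -> Y -> R) (A : algo V Y E) (rho : R -> R).
Variables (f : nat -> E -> V) (y : nat -> Y).

Lemma hist_shift a k : (1 <= a)%N -> (1 <= k)%N ->
  hist (fun j => f (j + a.-1)%N) (fun j => y (j + a.-1)%N) 1 k = hist f y a (k + a.-1).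
Proof.
move=> a_ge1 k_ge1; rewrite /hist /index_iota.
have -> : (k + a.-1 - a = k - 1)%N by lia.
have -> : a = (a.-1 + 1)%N by lia.
rewrite iotaDl -map_comp; apply: eq_map => j /=.
by rewrite addnC (_ : (a.-1 + 1).-1 = a.-1)%N //; lia.
Qed.

(* Shift outcomes and advice so that time [a] becomes time [1]. *)
Lemma regret_bound_from (i : E) a b :
  regret_bound D loss A rho -> (forall k i, D (f k i)) -> (1 <= a)%N -> (a <= b)%N ->
  algo_loss loss A f y a b - expert_loss loss f y i a b <= rho (b - a)%N%:R.
Proof.
move=> regret f_D a_ge1 le_ab.
have := regret (fun j => f (j + a.-1)%N) (fun j => y (j + a.-1)%N) (fun k => f_D _) (b - a)%N i.
have shift_sum (F : nat -> R) : \sum_(a <= k < b) F k = \sum_(1 <= k < (b - a).+1) F (k + a.-1)%N.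
  rewrite -{1}(_ : (1 + a.-1 = a)%N); last lia.
  by rewrite big_addn; congr (\sum_(1 <= k < _) _); lia.
rewrite /algo_loss /expert_loss !shift_sum.
congr (_ - _ <= _); apply: eq_big_nat => k /andP[k_ge1 _].
by rewrite /algo_pred hist_shift.
Qed.

Section Covering.
Variables (n : nat) (s shat : seq nat).
Hypotheses (n_gt0 : (0 < n)%N) (s_tpath : is_tpath n s) (shat_tpath : is_tpath n shat).
Hypothesis shat_covers : {subset s <= shat}.

Lemma AT_loss_segments :
  AT_loss loss A f y shat n =
  \sum_(c < (size shat).+1) algo_loss loss A f y (tpoint n shat c) (tpoint n shat c.+1).
Proof.
rewrite /AT_loss (sum_segments n_gt0 shat_tpath); apply: eq_bigr => c _.
by apply: eq_big_nat => k k_in; rewrite (tau_segment n_gt0 shat_tpath _ k_in) // -ltnS.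
Qed.

(* On the [c]-th segment of [shat] the meta expert follows a single base expert. *)
Lemma meta_loss_segments (a : nat -> E) :
  meta_loss loss f y n s a =
  \sum_(c < (size shat).+1) expert_loss loss f y (a (size (trunc (tpoint n shat c) s)))
    (tpoint n shat c) (tpoint n shat c.+1).
Proof.
transitivity (\sum_(1 <= k < n.+1) loss (f k (a (size (trunc k s)))) (y k)).
  rewrite /meta_loss (sum_segments n_gt0 s_tpath); apply: eq_bigr => c _.
  by apply: eq_big_nat => k k_in; rewrite (size_trunc_segment n_gt0 s_tpath _ k_in) // -ltnS.
rewrite (sum_segments n_gt0 shat_tpath); apply: eq_bigr => c _.
apply: eq_big_nat => k k_in.
by rewrite (trunc_covered_segment n_gt0 shat_tpath shat_covers _ k_in) // -ltnS.
Qed.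

Lemma AT_loss_le_meta_loss (a : nat -> E) :
  regret_bound D loss A rho -> (forall k i, D (f k i)) ->
  AT_loss loss A f y shat n <= meta_loss loss f y n s a + rho_sum rho n shat.
Proof.
move=> regret f_D.
rewrite AT_loss_segments meta_loss_segments /rho_sum -lerBlDl -sumrB.
apply: ler_sum => c _; apply: regret_bound_from => //.
  exact: (leq_tpoint n_gt0 shat_tpath (leq0n c) (ltnW (ltn_ord c))).
exact: leq_tpoint.
Qed.

End Covering.
End RestartedAlgorithm.

Lemma rho_sum_le (R : realType) (rho : R -> R) n shat : rho_ok rho -> (0 < n)%N -> is_tpath n shat ->
  rho_sum rho n shat <= (size shat).+1%:R * rho (n%:R / (size shat).+1%:R).
Proof.
move=> [_ _ rho_concave _] n_gt0 shat_tpath.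
set N := (size shat).+1.
have N_gt0 : 0 < N%:R :> R by rewrite ltr0n.
have convR : convex_dom (fun x : R^o => 0 <= x).
  by move=> x1 x2 l x1_ge0 x2_ge0 /andP[l_ge0 l_le1]; apply: addr_ge0; apply: mulr_ge0 => //; lra.
have concave_rho (x1 x2 : R^o) (l : R) : 0 <= x1 -> 0 <= x2 -> 0 <= l <= 1 ->
    l * rho x1 + (1 - l) * rho x2 <= rho (l *: x1 + (1 - l) *: x2).
  exact: rho_concave.
have lengths_sum : \sum_(c < N) ((tpoint n shat c.+1 - tpoint n shat c)%N%:R : R) = n%:R.
  have := sum_segments n_gt0 shat_tpath (fun _ => 1 : R).
  rewrite sumr_const_nat subn1 /= => ->.
  by apply: eq_bigr => c _; rewrite sumr_const_nat.
have invN_gt0 : 0 < (N%:R : R)^-1 by rewrite invr_gt0.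
have uniform_sum1 : \sum_(c <- index_enum 'I_N) (N%:R : R)^-1 = 1.
  by rewrite sumr_const card_ord -[_ *+ N]mulr_natl mulfV // gt_eqF.
have [_] := @concave_jensen R R^o _ rho convR concave_rho
  _ (index_enum 'I_N) (fun _ => (N%:R : R)^-1)
  (fun c : 'I_N => ((tpoint n shat c.+1 - tpoint n shat c)%N%:R : R^o))
  (fun _ => ltW invN_gt0) (fun c => ler0n _ _) uniform_sum1.
rewrite -mulr_sumr -scaler_sumr lengths_sum => jensen_rho.
rewrite /rho_sum -/N -(ler_pM2l invN_gt0) mulrA mulVf ?gt_eqF // mul1r.
by rewrite (_ : n%:R / N%:R = N%:R^-1 *: (n%:R : R^o)) // /GRing.scale /= mulrC.
Qed.

Lemma telescope_le (R : realType) (a b : nat -> R) n : (1 <= n)%N ->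
  (forall t, (1 <= t)%N -> (t < n)%N -> a t.+1 <= b t) ->
  \sum_(1 <= t < n.+1) (a t - b t) <= a 1%N - b n.
Proof.
elim: n => [//|[|n] IH] _ ab_le; first by rewrite big_nat1.
rewrite big_nat_recr //=.
have := IH isT (fun t t_ge1 lt_t => ab_le t t_ge1 (ltnW lt_t)).
have := ab_le n.+1 isT (ltnSn _).
lra.
Qed.

Section Algorithm1.
Variables (R : realType) (V : lmodType R) (Y : Type) (E : finType).
Variables (D : V -> Prop) (loss : V -> Y -> R) (A : algo V Y E).
Variables (w : nat -> seq nat -> R) (eta : nat -> R) (f : nat -> E -> V) (y : nat -> Y).
Hypothesis w_ok : weights_ok w.
Hypothesis eta_gt0 : forall t, 0 < eta t.

Local Notation L := (AT_loss loss A f y).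

Lemma AT_loss_trunc s k : L (trunc k s) k = L s k.
Proof. by apply: eq_big_nat => j /andP[_ le_j]; rewrite /tau trunc_trunc. Qed.

Lemma AT_loss_recr s t : (1 <= t)%N ->
  L s t = L s t.-1 + loss (algo_pred A f y (tau t s) t) (y t).
Proof. by case: t => [//|t] _; rewrite /AT_loss big_nat_recr. Qed.

Lemma weight_ge0 t (m : (t.-1).-tuple bool) : 0 <= w t (tpath_of m).
Proof. by case: w_ok => w01 _ _ _; case/andP: (w01 _ _ (is_tpath_tpath_of m)). Qed.

Lemma weight_sum1 t : \sum_(m : (t.-1).-tuple bool) w t (tpath_of m) = 1.
Proof. by case: w_ok. Qed.

(* The normalisers of Algorithm 1 at round [t], before and after the losses of
   round [t] are revealed. *)
Definition Zpre t := \sum_(m : (t.-1).-tuple bool) w t (tpath_of m) * expR (- eta t * L (tpath_of m) t.-1).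
Definition Zpost t := \sum_(m : (t.-1).-tuple bool) w t (tpath_of m) * expR (- eta t * L (tpath_of m) t).

Lemma Zpre_gt0 t : 0 < Zpre t.
Proof. by apply: mix_gt0 => [m||m]; rewrite ?weight_ge0 ?weight_sum1 ?expR_gt0. Qed.

Lemma Zpost_gt0 t : 0 < Zpost t.
Proof. by apply: mix_gt0 => [m||m]; rewrite ?weight_ge0 ?weight_sum1 ?expR_gt0. Qed.

Lemma Zpre1 : Zpre 1 = 1.
Proof.
rewrite /Zpre -[RHS](weight_sum1 1); apply: eq_bigr => m _.
by rewrite /AT_loss big_geq // mulr0 expR0 mulr1.
Qed.

(* Consistency of [w] turns [Zpre t.+1] into an average over [T_t], and
   decreasing learning rates only help ([ln_mix_expR_div_le]). *)
Lemma ln_Zpre_succ_le t : eta t.+1 <= eta t ->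
  ln (Zpre t.+1) / eta t.+1 <= ln (Zpost t) / eta t.
Proof.
move=> eta_le.
have -> : Zpre t.+1 = \sum_(m : (t.-1).-tuple bool) w t (tpath_of m) * expR (- eta t.+1 * L (tpath_of m) t).
  rewrite /Zpre /= -(sum_tpath_trunc (fun s => expR (- eta t.+1 * L s t)) t w_ok).
  by apply: eq_bigr => m _; rewrite AT_loss_trunc.
by apply: ln_mix_expR_div_le => //; [exact: weight_ge0 | exact: weight_sum1].
Qed.

Lemma ln_Zpost_ge n shat : is_tpath n shat -> 0 < w n shat ->
  - (ln (Zpost n) / eta n) <= L shat n + (eta n)^-1 * ln (w n shat)^-1.
Proof.
move=> shat_tpath w_gt0.
have [m0 m0_shat] := tpath_of_surj shat_tpath.
have term_gt0 : 0 < w n shat * expR (- eta n * L shat n) by rewrite mulr_gt0 ?expR_gt0.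
have : w n shat * expR (- eta n * L shat n) <= Zpost n.
  rewrite /Zpost (bigD1 m0) //= m0_shat lerDl; apply: sumr_ge0 => m _.
  by rewrite mulr_ge0 ?weight_ge0 ?expR_ge0.
rewrite -ler_ln ?posrE ?Zpost_gt0 // lnM ?posrE ?expR_gt0 // expRK lnV ?posrE // => ln_le.
have eta_n := eta_gt0 n.
have -> : L shat n + (eta n)^-1 * - ln (w n shat) = (eta n * L shat n - ln (w n shat)) / eta n.
  by field; rewrite gt_eqF.
by rewrite -mulNr ler_pM2r ?invr_gt0 //; move: ln_le; rewrite mulNr; lra.
Qed.

(* The per-round bounds telescope; the last normaliser is bounded below by the
   single term of [shat]. *)
Lemma alg1_loss_le_AT_loss n shat (slack : nat -> R) : (1 <= n)%N ->
  (forall t, (1 <= t)%N -> (t < n)%N -> eta t.+1 <= eta t) ->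
  is_tpath n shat -> 0 < w n shat ->
  (forall t, (1 <= t)%N -> (t <= n)%N ->
    loss (alg1_pred loss A f y w eta t) (y t) <= (ln (Zpre t) - ln (Zpost t)) / eta t + slack t) ->
  alg1_loss loss A f y w eta n <=
    L shat n + (eta n)^-1 * ln (w n shat)^-1 + \sum_(1 <= t < n.+1) slack t.
Proof.
move=> n_ge1 eta_noninc shat_tpath w_gt0 step.
apply: (le_trans (y := \sum_(1 <= t < n.+1) (ln (Zpre t) / eta t - ln (Zpost t) / eta t + slack t))).
  by apply: ler_sum_nat => t /andP[t_ge1 le_t]; rewrite -mulrBl; apply: step.
rewrite big_split /= lerD2r.
apply: le_trans (telescope_le n_ge1 (fun t t_ge1 lt_t => ln_Zpre_succ_le (eta_noninc t t_ge1 lt_t))) _.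
by rewrite /= Zpre1 ln1 mul0r add0r; exact: ln_Zpost_ge.
Qed.

Definition post_weight t (m : (t.-1).-tuple bool) :=
  w t (tpath_of m) * expR (- eta t * L (tpath_of m) t.-1) / Zpre t.
Definition path_pred t (m : (t.-1).-tuple bool) := algo_pred A f y (tau t (tpath_of m)) t.

Lemma alg1_pred_mix t : alg1_pred loss A f y w eta t = \sum_(m : (t.-1).-tuple bool) post_weight m *: path_pred m.
Proof.
have weightE (m : (t.-1).-tuple bool) : alg1_weight loss A f y w eta t (tpath_of m) =
    w t (tpath_of m) * expR (- eta t * L (tpath_of m) t.-1).
  by rewrite /alg1_weight AT_loss_trunc.
rewrite /alg1_pred (eq_bigr _ (fun m _ => weightE m)) -/(Zpre t) scaler_sumr.
by apply: eq_bigr => m _; rewrite weightE scalerA mulrC.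
Qed.

Lemma post_weight_ge0 t (m : (t.-1).-tuple bool) : 0 <= post_weight m.
Proof. by rewrite divr_ge0 ?mulr_ge0 ?weight_ge0 ?expR_ge0 // ltW ?Zpre_gt0. Qed.

Lemma post_weight_sum1 t : \sum_(m : (t.-1).-tuple bool) post_weight m = 1.
Proof. by rewrite -mulr_suml mulfV // gt_eqF // Zpre_gt0. Qed.

Lemma post_weight_expR t : (1 <= t)%N ->
  \sum_(m : (t.-1).-tuple bool) post_weight m * expR (- eta t * loss (path_pred m) (y t)) =
  Zpost t / Zpre t.
Proof.
move=> t_ge1; rewrite /Zpost mulr_suml; apply: eq_bigr => m _.
by rewrite /post_weight (AT_loss_recr _ t_ge1) mulrDr expRD mulrAC !mulrA.
Qed.

Hypothesis f_D : forall k i, D (f k i).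
Hypothesis A_D : algo_in_D D A.
Hypothesis convD : convex_dom D.

Lemma path_pred_D t (m : (t.-1).-tuple bool) : D (path_pred m).
Proof.
apply: A_D => [|i]; last exact: f_D.
rewrite /hist; elim: (index_iota _ t) => [|k l IH] /=; first exact: List.Forall_nil.
by apply: List.Forall_cons => // i; exact: f_D.
Qed.

Lemma alg1_step_convex t : (1 <= t)%N -> convex_loss D loss -> (forall x yy, D x -> 0 <= loss x yy <= 1) ->
  loss (alg1_pred loss A f y w eta t) (y t) <= (ln (Zpre t) - ln (Zpost t)) / eta t + eta t / 8.
Proof.
move=> t_ge1 loss_convex loss01.
have concave_neg_loss x1 x2 (lam : R) : D x1 -> D x2 -> 0 <= lam <= 1 ->
    lam * - loss x1 (y t) + (1 - lam) * - loss x2 (y t) <= - loss (lam *: x1 + (1 - lam) *: x2) (y t).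
  by move=> D1 D2 lam01; rewrite !mulrN -opprD lerN2; exact: loss_convex.
have [_] := concave_jensen convD concave_neg_loss (@post_weight_ge0 t) (@path_pred_D t) (post_weight_sum1 t).
rewrite -alg1_pred_mix; under eq_bigr do rewrite mulrN; rewrite sumrN lerN2 => jensen_loss.
have := hoeffding_mix (@post_weight_ge0 t) (post_weight_sum1 t) (fun m => loss01 _ (y t) (path_pred_D m)) (eta_gt0 t).
rewrite post_weight_expR // lnM ?posrE ?invr_gt0 ?Zpre_gt0 ?Zpost_gt0 // lnV ?posrE ?Zpre_gt0 //.
set q := \sum_m _ in jensen_loss * => hoeffding.
apply: (le_trans jensen_loss).
have eta_t := eta_gt0 t.
rewrite -(ler_pM2r eta_t) mulrDl divfK ?gt_eqF //.
have -> : eta t / 8 * eta t = eta t ^+ 2 / 8 by rewrite expr2; ring.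
lra.
Qed.

Lemma alg1_step_exp_concave t : (1 <= t)%N -> exp_concave D loss (eta t) ->
  loss (alg1_pred loss A f y w eta t) (y t) <= (ln (Zpre t) - ln (Zpost t)) / eta t.
Proof.
move=> t_ge1 loss_exp_concave.
have [_] := concave_jensen convD (loss_exp_concave (y t)) (@post_weight_ge0 t) (@path_pred_D t) (post_weight_sum1 t).
rewrite -alg1_pred_mix post_weight_expR // => jensen_exp.
have ratio_gt0 : 0 < Zpost t / Zpre t by rewrite divr_gt0 ?Zpost_gt0 ?Zpre_gt0.
have := ln_le_of_le_expR ratio_gt0 jensen_exp.
rewrite lnM ?posrE ?invr_gt0 ?Zpre_gt0 ?Zpost_gt0 // lnV ?posrE ?Zpre_gt0 // => ln_ratio.
have eta_t := eta_gt0 t.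
rewrite -(ler_pM2r eta_t) divfK ?gt_eqF //.
by move: ln_ratio; rewrite mulNr; lra.
Qed.

End Algorithm1.

Theorem lemma1 (R : realType) (V : lmodType R) (Y : Type) (E : finType)
  (D : V -> Prop) (loss : V -> Y -> R) (A : algo V Y E) (rho : R -> R)
  (w : nat -> seq nat -> R) (eta : nat -> R)
  (f : nat -> E -> V) (y : nat -> Y) (n : nat) (s shat : seq nat) :
  (1 <= n)%N ->
  convex_dom D -> convex_loss D loss ->
  (forall t i, D (f t i)) ->
  algo_in_D D A -> rho_ok rho -> regret_bound D loss A rho ->
  weights_ok w ->
  (forall t, 0 < eta t) ->
  (forall t, (1 <= t)%N -> (t < n)%N -> eta t.+1 <= eta t) ->
  is_tpath n s -> is_tpath n shat -> {subset s <= shat} -> 0 < w n shat ->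
  ((forall x yy, D x -> 0 <= loss x yy <= 1) ->
    forall a : nat -> E,
      alg1_loss loss A f y w eta n - meta_loss loss f y n s a
        <= rho_sum rho n shat + \sum_(1 <= t < n.+1) eta t / 8
           + (eta n)^-1 * ln (w n shat)^-1
      /\ rho_sum rho n shat + \sum_(1 <= t < n.+1) eta t / 8
           + (eta n)^-1 * ln (w n shat)^-1
        <= (size shat).+1%:R * rho (n%:R / (size shat).+1%:R)
           + \sum_(1 <= t < n.+1) eta t / 8 + (eta n)^-1 * ln (w n shat)^-1)
  /\
  (forall eta0 : R, 0 < eta0 -> exp_concave D loss eta0 ->
    (forall t, eta t = eta0) ->
    forall a : nat -> E,
      alg1_loss loss A f y w eta n - meta_loss loss f y n s a
        <= rho_sum rho n shat + eta0^-1 * ln (w n shat)^-1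
      /\ rho_sum rho n shat + eta0^-1 * ln (w n shat)^-1
        <= (size shat).+1%:R * rho (n%:R / (size shat).+1%:R)
           + eta0^-1 * ln (w n shat)^-1).
Proof.
move=> n_ge1 convD loss_convex f_D A_D rho_props regret w_ok eta_gt0 eta_noninc
  s_tpath shat_tpath shat_covers w_gt0.
have rho_sum_bound := rho_sum_le rho_props n_ge1 shat_tpath.
have restart_bound a := AT_loss_le_meta_loss y n_ge1 s_tpath shat_tpath shat_covers a regret f_D.
split => [loss01 a | eta0 eta0_gt0 loss_exp_concave eta_const a].
  have := alg1_loss_le_AT_loss w_ok eta_gt0 (slack := fun t => eta t / 8) n_ge1 eta_noninc
    shat_tpath w_gt0 (fun t t_ge1 _ => alg1_step_convex y w_ok eta_gt0 f_D A_D convD t_ge1 loss_convex loss01).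
  by have := restart_bound a; split; lra.
have exp_concave_eta t : exp_concave D loss (eta t) by rewrite eta_const.
have step t (t_ge1 : (1 <= t)%N) (_ : (t <= n)%N) :=
  alg1_step_exp_concave y w_ok eta_gt0 f_D A_D convD t_ge1 (exp_concave_eta t).
have alg1_bound := alg1_loss_le_AT_loss (slack := fun _ => 0) w_ok eta_gt0 n_ge1 eta_noninc
  shat_tpath w_gt0 (fun t t_ge1 le_t => ler_wpDr (lexx 0) (step t t_ge1 le_t)).
rewrite big1 ?addr0 // eta_const in alg1_bound.
by have := restart_bound a; split; lra.
Qed.
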